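(* Fix $d\in\mathbb{N}$ and $\varepsilon>0$. Let $a=\lceil 32/\varepsilon+2\rceil$ and $Q=\{a^{2j-1}: j\in\mathbb{N}\}\subseteq\mathbb{N}$. Then for all $m_1<\dots<m_d<k$ in $Q$ and all step preserving maps $F\colon S^+_{\ell_\infty^k}\to S^+_{\ell_1^k}$ with $\omega_F(\tfrac1d)\leq\tfrac{\varepsilon}{8}$, we have \[\Big\|F(z(\bar m))-\frac1k\sum_{i=1}^k e_i\Big\|_1\leq\varepsilon,\] where $\bar m=(m_1,\dots,m_d)$ and $(e_i)_{i=1}^k$ is the standard basis of $\mathbb{R}^k$.
   Context: For $p\in\{1,\infty\}$, $S^+_{\ell_p^k}=\{(x_i)_{i=1}^k\in\mathbb{R}^k: \|x\|_p=1,\ x_i\ge0 \text{ for all } i\}$. For $0=m_0<m_1<\dots<m_d<k$, $z(\bar m)=\sum_{s=1}^d\big(1-\frac{s-1}{d}\big)1_{(m_{s-1},m_s]}\in S^+_{\ell_\infty^k}$, where $1_{(a,b]}$ is the vector with entries $1$ at indices $i\in(a,b]$ and $0$ elsewhere. Writing $F=(F_i)_{i=1}^k$ for the coordinates, $F$ is step preserving if $x_i=x_j$ implies $F_i(x)=F_j(x)$ for all $x$ in the domain and all $i,j$. $\omega_F(t)=\sup\{\|F(x)-F(y)\|_1: \|x-y\|_\infty\le t\}$. *)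

From HB Require Import structures.
From mathcomp Require Import all_boot all_order all_algebra.
From mathcomp Require Import all_classical all_reals.
Set Implicit Arguments. Unset Strict Implicit. Unset Printing Implicit Defensive.
Import Order.TTheory GRing.Theory Num.Theory.
Local Open Scope ring_scope.
Local Open Scope classical_set_scope.

(* vectors of R^k are functions 'I_k -> R; coordinate i : 'I_k is the
   paper's coordinate i+1 *)
Definition norm1 (R : realType) (k : nat) (x : 'I_k -> R) : R :=
  \sum_(i < k) `|x i|.
Definition norminf (R : realType) (k : nat) (x : 'I_k -> R) : R :=
  \big[Num.max/0]_(i < k) `|x i|.

Definition vsub (R : realType) (k : nat) (x y : 'I_k -> R) : 'I_k -> R :=
  fun i => x i - y i.

Definition Splus1 (R : realType) (k : nat) : set ('I_k -> R) :=
  [set x | norm1 x = 1 /\ forall i, 0 <= x i].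
Definition SplusInf (R : realType) (k : nat) : set ('I_k -> R) :=
  [set x | norminf x = 1 /\ forall i, 0 <= x i].

Definition step_preserving (R : realType) (k : nat)
  (F : ('I_k -> R) -> ('I_k -> R)) : Prop :=
  forall x, SplusInf x -> forall i j : 'I_k, x i = x j -> F x i = F x j.

Definition omega (R : realType) (k : nat) (F : ('I_k -> R) -> ('I_k -> R))
  (t : R) : R :=
  sup [set r | exists x y, [/\ SplusInf x, SplusInf y,
        norminf (vsub x y) <= t & r = norm1 (vsub (F x) (F y))]].

(* z(m_bar) with m 0 = 0 and m_1 < ... < m_d given by m 1, ..., m d *)
Definition zvec (R : realType) (k d : nat) (m : nat -> nat) : 'I_k -> R :=
  fun i => \sum_(1 <= s < d.+1)
     (1 - (s.-1)%:R / d%:R) * (if (m s.-1 < i.+1 <= m s)%N then 1 else 0).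

Definition aeps (R : realType) (eps : R) : nat :=
  `|Num.ceil (32 / eps + 2)|%N.

Definition Qset (a : nat) : set nat :=
  [set n | exists j : nat, (1 <= j)%N /\ n = (a ^ (2 * j - 1))%N].

Definition uniform (R : realType) (k : nat) : 'I_k -> R := fun _ => 1 / k%:R.

From HB Require Import structures.
From mathcomp Require Import all_boot all_order all_algebra.
From mathcomp Require Import all_classical all_reals.
From mathcomp Require Import zify ring lra.
Set Implicit Arguments. Unset Strict Implicit. Unset Printing Implicit Defensive.
Import Order.TTheory GRing.Theory Num.Theory.
Local Open Scope ring_scope.
Local Open Scope classical_set_scope.

(** The test vectors are [z = z(m)] and, for each parity [b], the vector [y_b]
    obtained from [z] by raising every block of index parity [b] to the level
    of the preceding block.  Then [|z - y_b|_oo <= 1/d], so [F z] is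
    [eps/8]-close in [l_1] to both [F y_0] and [F y_1], and [F y_b] is
    constant on each pair of consecutive blocks that [y_b] merges.  Since
    consecutive points of [Q] differ by a factor [>= a^2], each block is at
    most a [1/(a^2-1)] fraction of the next one, so [F y_b] puts at most that
    fraction of the next block's mass on it; summing, [F z] has mass at most
    [eps/4 + 2/(a^2-1)] before [m_(d-1)].  On the remaining coordinates
    [F y_(odd d)] is constant, and as [m_(d-1)/k <= 1/a^2] that constant is
    close to [1/k]; hence [F z] is close to uniform. *)

Lemma sum_blocks (R : realType) (M : nat -> nat) (phi : nat -> R) (n : nat) :
  {homo M : s t / (s <= t)%N} ->
  \sum_(t < n) \sum_(M t <= i < M t.+1) phi i = \sum_(M 0 <= i < M n) phi i.
Proof.
move=> M_mono; elim: n => [|n IHn]; first by rewrite big_ord0 big_geq.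
by rewrite big_ord_recr /= IHn -big_cat_nat //; apply: M_mono.
Qed.

Lemma sum_subrange_le (R : realType) (phi : nat -> R) (p q k : nat) :
  (forall i, 0 <= phi i) -> (p <= q <= k)%N ->
  \sum_(p <= i < q) phi i <= \sum_(0 <= i < k) phi i.
Proof.
move=> phi_ge0 /andP[pq qk].
rewrite (big_cat_nat (leq0n p) (leq_trans pq qk)) (big_cat_nat pq qk) /=.
by rewrite addrCA lerDl addr_ge0 // sumr_ge0.
Qed.

Lemma block_mass_le (R : realType) (f g : nat -> R) (A : R) (p q r : nat) :
  0 <= A -> (p <= q <= r)%N -> (forall i, (p <= i < r)%N -> g i = g p) ->
  0 <= g p -> A * (q - p)%:R <= (r - q)%:R ->
  A * \sum_(p <= i < q) f i <=
    A * \sum_(p <= i < q) `|f i - g i| + \sum_(q <= i < r) g i.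
Proof.
move=> A_ge0 /andP[pq qr] g_const gp_ge0 growth.
have g_sum s t : (p <= s)%N -> (t <= r)%N -> \sum_(s <= i < t) g i = g p *+ (t - s).
  move=> ps tr; rewrite -sumr_const_nat.
  apply: eq_big_nat => i /andP[si it]; apply: g_const.
  by rewrite (leq_trans ps si) (leq_trans it tr).
have f_le : \sum_(p <= i < q) f i <= \sum_(p <= i < q) `|f i - g i| + g p *+ (q - p).
  rewrite -g_sum // -big_split /=; apply: ler_sum_nat => i _.
  by rewrite -lerBlDr ler_norm.
apply: le_trans (ler_wpM2l A_ge0 f_le) _.
rewrite mulrDr lerD2l g_sum // -[g p *+ _]mulr_natr -[g p *+ _]mulr_natr mulrCA.
exact: ler_wpM2l.
Qed.

Section HeadMass.
Variables (R : realType) (n k : nat) (M : nat -> nat) (A : R).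
Variables (f : nat -> R) (g : bool -> nat -> R).
Hypotheses (A_ge0 : 0 <= A) (M_mono : {homo M : s t / (s <= t)%N}).
Hypotheses (M0 : M 0 = 0%N) (Mk : (M n.+1 <= k)%N).
Hypothesis g_ge0 : forall b i, 0 <= g b i.
Hypothesis g_pair_const : forall t, (t < n)%N ->
  exists b, forall i, (M t <= i < M t.+2)%N -> g b i = g b (M t).
Hypothesis growth : forall t, (t < n)%N ->
  A * (M t.+1 - M t)%:R <= (M t.+2 - M t.+1)%:R.

Lemma head_mass_le :
  A * \sum_(0 <= i < M n) f i <=
    A * \sum_(0 <= i < k) (`|f i - g false i| + `|f i - g true i|) +
    \sum_(0 <= i < k) (g false i + g true i).
Proof.
pose h i := `|f i - g false i| + `|f i - g true i|.
pose G i := g false i + g true i.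
have block (t : 'I_n) : A * \sum_(M t <= i < M t.+1) f i <=
    A * \sum_(M t <= i < M t.+1) h i + \sum_(M t.+1 <= i < M t.+2) G i.
  have [b gb_const] := g_pair_const (ltn_ord t).
  have Mt_Mt2 : (M t <= M t.+1 <= M t.+2)%N by rewrite !M_mono.
  apply: le_trans (block_mass_le _ A_ge0 Mt_Mt2 gb_const (g_ge0 _ _) (growth (ltn_ord t))) _.
  apply: lerD; first apply: ler_wpM2l => //.
  - by apply: ler_sum_nat => i _; case: b {gb_const}; rewrite /h ?lerDl ?lerDr.
  by apply: ler_sum_nat => i _; case: b {gb_const}; rewrite /G ?lerDl ?lerDr g_ge0.
rewrite -{1}M0 -sum_blocks // mulr_sumr.
apply: le_trans (ler_sum _ (fun t _ => block t)) _.
rewrite big_split /= -mulr_sumr sum_blocks // M0.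
rewrite (sum_blocks (M := fun t => M t.+1)); last by move=> s t st; apply: M_mono.
have h_ge0 i : 0 <= h i by rewrite addr_ge0.
have G_ge0 i : 0 <= G i by rewrite addr_ge0.
apply: lerD; first apply: ler_wpM2l => //.
  by apply: sum_subrange_le => //; rewrite /= (leq_trans (M_mono (leqnSn n)) Mk).
by apply: sum_subrange_le => //; rewrite M_mono.
Qed.

End HeadMass.

Lemma sum_nat_eq1_gt0 (R : realType) (phi : nat -> R) (k : nat) :
  \sum_(0 <= i < k) phi i = 1 -> (0 < k)%N.
Proof. by case: k => //; rewrite big_geq // => /esym/eqP; rewrite oner_eq0. Qed.

Lemma dist_uniform_le (R : realType) (k n : nat) (f g : nat -> R) :
  (n <= k)%N -> (forall i, 0 <= f i) -> (forall i, 0 <= g i) ->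
  \sum_(0 <= i < k) f i = 1 -> \sum_(0 <= i < k) g i = 1 ->
  (forall i, (n <= i < k)%N -> g i = g n) ->
  \sum_(0 <= i < k) `|f i - 1 / k%:R| <=
    2 * \sum_(0 <= i < n) f i + 2 * (n%:R / k%:R) +
    \sum_(0 <= i < k) `|f i - g i|.
Proof.
move=> nk f_ge0 g_ge0 f_sum1 g_sum1 g_tail.
have k_gt0 := sum_nat_eq1_gt0 f_sum1.
rewrite div1r; set u := k%:R^-1.
have u_ge0 : 0 <= u by rewrite invr_ge0.
rewrite !(big_cat_nat (leq0n n) nk) /=.
set X := \sum_(0 <= i < n) f i; set S := \sum_(0 <= i < n) g i.
set Da := \sum_(0 <= i < n) `|f i - g i|; set Dc := \sum_(n <= i < k) `|f i - g i|.
have head : \sum_(0 <= i < n) `|f i - u| <= X + n%:R * u.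
  have -> : n%:R * u = \sum_(0 <= i < n) u by rewrite sumr_const_nat subn0 mulr_natl.
  rewrite -big_split /=; apply: ler_sum_nat => i _; apply: le_trans (ler_normB _ _) _.
  by rewrite !ger0_norm.
have tail : \sum_(n <= i < k) `|f i - u| <= Dc + (k - n)%:R * `|g n - u|.
  rewrite mulr_natl -sumr_const_nat -big_split /=.
  apply: ler_sum_nat => i i_tail; rewrite -(g_tail _ i_tail); exact: ler_distD.
have tail_mass : (k - n)%:R * g n = 1 - S.
  have g_split : S + \sum_(n <= i < k) g i = 1 by rewrite -(big_cat_nat (leq0n n) nk).
  rewrite -[E in _ = E - S]g_split addrC addKr mulr_natl.
  by rewrite -sumr_const_nat; apply: eq_big_nat => i /g_tail ->.
have tail_dev : (k - n)%:R * `|g n - u| <= n%:R * u + S.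
  rewrite -[(k - n)%:R]ger0_norm // -normrM mulrBr tail_mass natrB // mulrBl.
  rewrite mulfV ?pnatr_eq0 -?lt0n // opprB addrC addrA subrK.
  by apply: le_trans (ler_normB _ _) _; rewrite !ger0_norm ?mulr_ge0 ?sumr_ge0.
have S_le : S <= X + Da.
  rewrite -big_split /=; apply: ler_sum_nat => i _.
  by rewrite -lerBlDl -normrN opprB ler_norm.
lra.
Qed.

Lemma near_uniform (R : realType) (d k : nat) (M : nat -> nat)
    (f : nat -> R) (g : bool -> nat -> R) (a eps : R) :
  (0 < d)%N -> {homo M : s t / (s <= t)%N} -> M 0 = 0%N -> M d.+1 = k ->
  (forall i, 0 <= f i) -> (forall b i, 0 <= g b i) ->
  \sum_(0 <= i < k) f i = 1 -> (forall b, \sum_(0 <= i < k) g b i = 1) ->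
  (forall b, \sum_(0 <= i < k) `|f i - g b i| <= eps / 8) ->
  (forall t, (t < d)%N ->
    exists b, forall i, (M t <= i < M t.+2)%N -> g b i = g b (M t)) ->
  (forall s, (0 < s < d)%N -> a ^+ 2 * (M s)%:R <= (M s.+1)%:R) ->
  0 < eps -> 32 / eps + 2 <= a ->
  \sum_(0 <= i < k) `|f i - 1 / k%:R| <= eps.
Proof.
move=> d_gt0 M_mono M0 Mk f_ge0 g_ge0 f_sum1 g_sum1 fg_close g_pair_const
  lacunary eps_gt0 a_ge.
set A := a ^+ 2 - 1.
have A_ge : 32 / eps <= A.
  have : 0 < 32 / eps by rewrite divr_gt0.
  rewrite /A; nra.
have A_gt0 : 0 < A by apply: lt_le_trans A_ge; rewrite divr_gt0.
have A_eps : 32 <= A * eps.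
  by rewrite -[32](divfK (lt0r_neq0 eps_gt0)) ler_wpM2r // ltW.
have growth t : (t < d.-1)%N -> A * (M t.+1 - M t)%:R <= (M t.+2 - M t.+1)%:R.
  move=> t_lt; have t1_lt : (0 < t.+1 < d)%N by rewrite ltn0Sn -ltn_predRL.
  have := lacunary _ t1_lt; have := mulr_ge0 (ltW A_gt0) (ler0n R (M t)).
  rewrite !natrB ?M_mono // /A; lra.
have Mdk : (M d.-1.+1 <= k)%N by rewrite prednK // -Mk M_mono.
have head := head_mass_le f (ltW A_gt0) M_mono M0 Mdk g_ge0
  (fun t t_lt => g_pair_const t (leq_trans t_lt (leq_pred d))) growth.
rewrite big_split /= !big_split /= !g_sum1 in head.
have d1_lt : (d.-1 < d)%N by rewrite ltn_predL.
have [b gb_tail] := g_pair_const _ d1_lt.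
rewrite prednK // Mk in gb_tail.
have n0k : (M d.-1 <= k)%N by rewrite -Mk M_mono // leqW // leq_pred.
have tail := dist_uniform_le n0k f_ge0 (g_ge0 b) f_sum1 (g_sum1 b) gb_tail.
have n0_small : A * (M d.-1)%:R <= k%:R.
  have [->|d1_gt0] := posnP d.-1; first by rewrite M0 mulr0.
  have := lacunary d.-1; rewrite d1_gt0 d1_lt prednK // => /(_ isT).
  have : (M d)%:R <= k%:R :> R by rewrite ler_nat -Mk M_mono.
  have := ler0n R (M d.-1); rewrite /A; lra.
have k_gt0 : (0 < k%:R :> R) by rewrite ltr0n (sum_nat_eq1_gt0 f_sum1).
have head_frac_small : A * ((M d.-1)%:R / k%:R) <= 1 by rewrite mulrA ler_pdivrMr // mul1r.
rewrite -(ler_pM2l A_gt0); apply: le_trans (ler_wpM2l (ltW A_gt0) tail) _.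
have head_small : A * \sum_(0 <= i < M d.-1) f i <= A * (eps / 4) + 2.
  apply: le_trans head _; rewrite lerD2r ler_wpM2l ?(ltW A_gt0) //.
  by have := fg_close false; have := fg_close true; lra.
have := ler_wpM2l (ltW A_gt0) (fg_close b); lra.
Qed.

Section StepVector.
Variables (R : realType) (k n : nat) (M : nat -> nat).
Hypotheses (M_mono : {homo M : s t / (s <= t)%N}) (M0 : M 0 = 0%N) (Mn : M n = k).

Definition step_vec (v : nat -> R) : 'I_k -> R :=
  fun i => \sum_(t < n | (M t <= i < M t.+1)%N) v t.

Lemma block_unique s t i :
  (M s <= i < M s.+1)%N -> (M t <= i < M t.+1)%N -> s = t.
Proof.
move=> /andP[Ms_i i_Ms] /andP[Mt_i i_Mt].
case: (ltngtP s t) => // [st|ts].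
  by have := leq_trans i_Ms (leq_trans (M_mono st) Mt_i); rewrite ltnn.
by have := leq_trans i_Mt (leq_trans (M_mono ts) Ms_i); rewrite ltnn.
Qed.

Lemma block_lt t (i : 'I_k) : (M t <= i < M t.+1)%N -> (t < n)%N.
Proof.
move=> /andP[Mt_i _]; rewrite ltnNge; apply/negP => /M_mono.
by rewrite Mn => /leq_trans/(_ Mt_i); rewrite leqNgt ltn_ord.
Qed.

Lemma block_exists (i : 'I_k) : exists t, (M t <= i < M t.+1)%N.
Proof.
suff : forall j, (i < M j)%N -> exists t, (M t <= i < M t.+1)%N.
  by move/(_ n); rewrite Mn; apply.
elim=> [|j IHj]; first by rewrite M0.
by case: (ltnP i (M j)) => [/IHj //|Mj_i i_Mj]; exists j; rewrite Mj_i.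
Qed.

Lemma step_vecE v t (i : 'I_k) : (M t <= i < M t.+1)%N -> step_vec v i = v t.
Proof.
move=> t_blk; rewrite /step_vec (big_pred1 (Ordinal (block_lt t_blk))) // => s /=.
by apply/idP/eqP => [/block_unique/(_ t_blk) s_t|->//]; apply: val_inj.
Qed.

Lemma step_vec_pair v t (i : 'I_k) :
  v t.+1 = v t -> (M t <= i < M t.+2)%N -> step_vec v i = v t.
Proof.
move=> v_pair /andP[Mt_i i_Mt2].
case: (ltnP i (M t.+1)) => [i_Mt1|Mt1_i]; first by rewrite (@step_vecE _ t) ?Mt_i.
by rewrite (@step_vecE _ t.+1) ?Mt1_i.
Qed.

Lemma step_vec_range v (i : 'I_k) : exists2 t, (t < n)%N & step_vec v i = v t.
Proof.
by have [t t_blk] := block_exists i; exists t; [exact: block_lt t_blk|exact: step_vecE].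
Qed.

Lemma step_vec_SplusInf v : (0 < n)%N -> (0 < M 1)%N -> v 0%N = 1 ->
  (forall t, (t < n)%N -> 0 <= v t <= 1) -> SplusInf (step_vec v).
Proof.
move=> n_gt0 M1_gt0 v0 v_01.
have v_ge0 i : 0 <= step_vec v i.
  by have [t /v_01/andP[vt_ge0 _] ->] := step_vec_range v i.
split=> //; apply/le_anti/andP; split.
  apply: bigmax_le => // i _; have [t /v_01/andP[vt_ge0 vt_le1] ->] := step_vec_range v i.
  by rewrite ger0_norm.
have k_gt0 : (0 < k)%N by rewrite -Mn (leq_trans M1_gt0) ?M_mono.
apply: le_trans (le_bigmax _ _ (Ordinal k_gt0)).
by rewrite (@step_vecE _ 0) ?M0 //= v0 normr1.
Qed.

Lemma norminf_step_vec_sub v w (c : R) : 0 <= c ->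
  (forall t, (t < n)%N -> `|v t - w t| <= c) ->
  norminf (vsub (step_vec v) (step_vec w)) <= c.
Proof.
move=> c_ge0 vw_le; apply: bigmax_le => // i _.
have [t t_blk] := block_exists i.
by rewrite /vsub !(step_vecE _ t_blk) vw_le // (block_lt t_blk).
Qed.

End StepVector.

Section TestVectors.
Variables (R : realType) (d k : nat) (m : nat -> nat).
Hypotheses (d_gt0 : (0 < d)%N) (m0 : m 0 = 0%N).
Hypotheses (m_incr : forall s, (s < d)%N -> (m s < m s.+1)%N) (m_lt : (m d < k)%N).

(* Block [t] of [z(m)] is the index interval [[cut t, cut t.+1)]; the last
   one, of level 0, is closed by [cut d.+1 = k]. *)
Definition cut (t : nat) : nat := if (t <= d)%N then m t else k.

Definition zlevel (t : nat) : R := 1 - t%:R / d%:R.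

(* Blocks of parity [b] are lowered by one index, i.e. merged with their
   predecessor; [t.-1] also keeps block 0 at level 1. *)
Definition ylevel (b : bool) (t : nat) : R :=
  zlevel (if odd t == b then t.-1 else t).

Definition yvec (b : bool) : 'I_k -> R := step_vec d.+1 cut (ylevel b).

Lemma cut_mono : {homo cut : s t / (s <= t)%N}.
Proof.
apply: homo_leq leqnn leq_trans _ => t; rewrite /cut.
by case: (ltngtP t d) => [/m_incr/ltnW //|//|->]; rewrite ltnW.
Qed.

Lemma cut0 : cut 0 = 0%N. Proof. by rewrite /cut leq0n. Qed.

Lemma cut_last : cut d.+1 = k. Proof. by rewrite /cut ltnn. Qed.

Lemma cut_le t : (cut t <= k)%N.
Proof.
case: (leqP t d) => [t_le|t_gt]; last by rewrite /cut ifN // -ltnNge.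
by apply: leq_trans (cut_mono t_le) _; rewrite /cut leqnn ltnW.
Qed.

Lemma zlevel_01 t : (t <= d)%N -> 0 <= zlevel t <= 1.
Proof.
move=> t_le; have d_pos : (0 : R) < d%:R by rewrite ltr0n.
by rewrite /zlevel gerBl ?divr_ge0 // subr_ge0 ler_pdivrMr // mul1r ler_nat t_le.
Qed.

Lemma zlevel_pred_dist t : `|zlevel t - zlevel t.-1| <= 1 / d%:R.
Proof.
case: t => [|t]; first by rewrite subrr normr0 divr_ge0.
rewrite /zlevel /= -addn1 natrD mulrDl.
have -> : forall x y : R, 1 - (x + y) - (1 - x) = - y by move=> x y; ring.
by rewrite normrN ger0_norm ?divr_ge0.
Qed.

Lemma ylevel_pair t : ylevel (odd t.+1) t = zlevel t /\ ylevel (odd t.+1) t.+1 = zlevel t.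
Proof. by rewrite /ylevel /= eqxx; case: (odd t). Qed.

Lemma zvec_step : @zvec R k d m = step_vec d.+1 cut zlevel.
Proof.
apply/funext => i; rewrite /zvec /step_vec big_add1 [RHS]big_mkcond big_ord_recr /=.
rewrite /zlevel divff ?pnatr_eq0 -?lt0n // subrr if_same addr0 big_mkord.
apply: eq_bigr => t _; rewrite /cut (ltnW (ltn_ord t)) ltn_ord ltnS.
by case: ifP; rewrite ?mulr1 ?mulr0.
Qed.

Lemma zvec_SplusInf : SplusInf (@zvec R k d m).
Proof.
rewrite zvec_step; apply: (step_vec_SplusInf (@cut_mono) cut0 cut_last) => //.
- by rewrite /cut d_gt0 -[X in (X < _)%N]m0 m_incr.
- by rewrite /zlevel mul0r subr0.
- by move=> t; apply: zlevel_01.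
Qed.

Lemma yvec_SplusInf b : SplusInf (yvec b).
Proof.
apply: (step_vec_SplusInf (@cut_mono) cut0 cut_last) => //.
- by rewrite /cut d_gt0 -[X in (X < _)%N]m0 m_incr.
- by rewrite /ylevel; case: ifP; rewrite /zlevel mul0r subr0.
- move=> t t_le; apply: zlevel_01; case: ifP => _ //.
  exact: leq_trans (leq_pred t) t_le.
Qed.

Lemma norminf_zvec_yvec b : norminf (vsub (@zvec R k d m) (yvec b)) <= 1 / d%:R.
Proof.
rewrite zvec_step; apply: (norminf_step_vec_sub (@cut_mono) cut0 cut_last).
  by rewrite divr_ge0.
by move=> t _; rewrite /ylevel; case: ifP; rewrite ?subrr ?normr0 ?divr_ge0 ?zlevel_pred_dist.
Qed.

Lemma yvec_pair t (i : 'I_k) :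
  (cut t <= i < cut t.+2)%N -> yvec (odd t.+1) i = zlevel t.
Proof.
have [yt yt1] := ylevel_pair t.
by move=> i_in; rewrite /yvec (step_vec_pair (@cut_mono) cut_last _ i_in) ?yt ?yt1.
Qed.

Lemma step_preserving_yvec_pair F t (i j : 'I_k) : step_preserving F ->
  (cut t <= i < cut t.+2)%N -> (cut t <= j < cut t.+2)%N ->
  F (yvec (odd t.+1)) i = F (yvec (odd t.+1)) j.
Proof.
by move=> F_step i_in j_in; apply: F_step (yvec_SplusInf _) _ _ _; rewrite !yvec_pair.
Qed.

End TestVectors.

Lemma Qset_gap (a x y : nat) :
  (1 < a)%N -> Qset a x -> Qset a y -> (x < y)%N -> (a ^ 2 * x <= y)%N.
Proof.
move=> a_gt1 [i [i_ge1 ->]] [j [j_ge1 ->]]; rewrite ltn_exp2l // => ij.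
by rewrite -expnD leq_pexp2l //; lia.
Qed.

Lemma aeps_ge (R : realType) (eps : R) : 0 < eps -> 32 / eps + 2 <= (aeps eps)%:R.
Proof.
move=> eps_gt0; have c_gt0 : 0 < 32 / eps by rewrite divr_gt0.
by rewrite /aeps natr_absz ger0_norm ?ceil_ge // ceil_ge0; lra.
Qed.

Lemma aeps_gt1 (R : realType) (eps : R) : 0 < eps -> (1 < aeps eps)%N.
Proof.
move=> eps_gt0; have c_gt0 : 0 < 32 / eps by rewrite divr_gt0.
by rewrite -(ltr_nat R); apply: lt_le_trans (aeps_ge eps_gt0); lra.
Qed.

Lemma norm1_le_omega (R : realType) (k : nat) (F : ('I_k -> R) -> 'I_k -> R)
    (x y : 'I_k -> R) (t : R) :
  (forall x, SplusInf x -> Splus1 (F x)) -> SplusInf x -> SplusInf y ->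
  norminf (vsub x y) <= t -> norm1 (vsub (F x) (F y)) <= omega F t.
Proof.
move=> F_S1 x_S y_S xy_t; apply: ub_le_sup; last by exists x, y; split.
exists 2 => _ [x' [y' [/F_S1[x'_1 _] /F_S1[y'_1 _] _ ->]]].
apply: le_trans (ler_sum _ (fun i _ => ler_normB (F x' i) (F y' i))) _.
by rewrite big_split /= -/(norm1 (F x')) -/(norm1 (F y')) x'_1 y'_1.
Qed.

Lemma sum_inord (R : realType) (k : nat) (x : 'I_k.+1 -> R) :
  \sum_(i < k.+1) x i = \sum_(0 <= n < k.+1) x (inord n).
Proof. by rewrite big_mkord; apply: eq_bigr => i _; rewrite inord_val. Qed.

(* [inord n] is [ord0] for [n > k], so nonnegativity holds for every [n]. *)
Lemma Splus1_inord (R : realType) (k : nat) (x : 'I_k.+1 -> R) :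
  Splus1 x -> (forall n, 0 <= x (inord n)) /\ \sum_(0 <= n < k.+1) x (inord n) = 1.
Proof.
move=> [x_1 x_ge0]; split=> // ; rewrite -sum_inord -x_1.
by apply: eq_bigr => i _; rewrite ger0_norm.
Qed.

Theorem theorem1p5 (R : realType) (d : nat) (eps : R) :
  (1 <= d)%N -> 0 < eps ->
  forall (k : nat) (m : nat -> nat),
    m 0%N = 0%N ->
    (forall s, (s < d)%N -> (m s < m s.+1)%N) ->
    (m d < k)%N ->
    (forall s, (1 <= s <= d)%N -> Qset (aeps eps) (m s)) ->
  forall F : ('I_k -> R) -> ('I_k -> R),
    (forall x, SplusInf x -> Splus1 (F x)) ->
    step_preserving F ->
    omega F (1 / d%:R) <= eps / 8 ->
    norm1 (vsub (F (@zvec R k d m)) (@uniform R k)) <= eps.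
Proof.
move=> d_gt0 eps_gt0 k m m0 m_incr m_lt mQ F F_S1 F_step F_omega.
case: k m_lt F F_S1 F_step F_omega => [//|k] m_lt F F_S1 F_step F_omega.
have z_S := zvec_SplusInf R d_gt0 m0 m_incr m_lt.
have y_S := yvec_SplusInf R d_gt0 m0 m_incr m_lt.
have [Fz_ge0 Fz_sum1] := Splus1_inord (F_S1 _ z_S).
have Fy_prob b := Splus1_inord (F_S1 _ (y_S b)).
rewrite /norm1 /vsub /uniform sum_inord.
apply: (@near_uniform _ d k.+1 (cut d k.+1 m) _
  (fun b n => F (yvec R d m b) (inord n)) (aeps eps)%:R) => //.
- exact: (@cut_mono d k.+1 m m_incr m_lt).
- exact: (cut_last d k.+1 m).
- by move=> b; have [] := Fy_prob b.
- by move=> b; have [] := Fy_prob b.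
- move=> b; apply: le_trans F_omega.
  have := norm1_le_omega F_S1 z_S (y_S b) (norminf_zvec_yvec _ d_gt0 m0 m_incr m_lt _).
  by rewrite /norm1 /vsub sum_inord.
- move=> t _; exists (odd t.+1) => i /andP[Mt_i i_Mt2].
  have i_k := leq_trans i_Mt2 (cut_le m_incr m_lt _).
  have Mt_k := leq_ltn_trans Mt_i i_k.
  apply: (step_preserving_yvec_pair d_gt0 m0 m_incr m_lt F_step);
    by rewrite inordK ?leqnn ?Mt_i ?(leq_ltn_trans Mt_i i_Mt2).
- move=> s /andP[s_gt0 s_lt]; rewrite -natrX -natrM ler_nat /cut (ltnW s_lt) s_lt.
  apply: Qset_gap (aeps_gt1 eps_gt0) (mQ s _) (mQ s.+1 _) (m_incr s s_lt).
    by rewrite s_gt0 ltnW.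
  by rewrite s_lt.
- exact: aeps_ge.
Qed.
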